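(* A $(\circ,\wedge,\mathsf{A})$-algebra $\mathfrak{A}$ is completely representable by partial functions if and only if $\mathfrak{A}$ is representable by partial functions, $\mathfrak{A}$ is atomic, and composition in $\mathfrak{A}$ is completely left-distributive over joins.
   Context: A $(\circ,\wedge,\mathsf{A})$-algebra is a set with two binary operations $\circ,\wedge$ and one unary operation $\mathsf{A}$. An algebra of partial functions of this signature is a set of partial functions, with base $X$ the union of all their domains and ranges, closed under: composition $f\circ g=\{(x,z)\mid \exists y\,(x,y)\in f,(y,z)\in g\}$ (apply $f$ first, then $g$); intersection; antidomain $\mathsf{A}(f)=\{(x,x)\mid x\in X, x\notin\mathrm{dom}(f)\}$. A representation by partial functions is an isomorphism onto such an algebra. The order is $a\le b\iff a\wedge b=a$, with least element $0=\mathsf{A}(a)\circ a$. An atom is a minimal nonzero element; $\mathfrak{A}$ is atomic if every nonzero element is above an atom. A representation $\theta$ is complete if for every $S$ with $\bigvee S$ existing, $\theta(\bigvee S)=\bigcup\theta[S]$ (equivalently, for every nonempty $S$ with $\bigwedge S$ existing, $\theta(\bigwedge S)=\bigcap\theta[S]$); $\mathfrak{A}$ is completely representable if it has a complete representation. Composition is completely left-distributive over joins if for every $a$ and every $S$ with $\bigvee S$ existing, $\bigvee\{a\circ s\mid s\in S\}$ exists and equals $a\circ\bigvee S$. *)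

(* A (comp, meet, antidom)-algebra is given by a carrier type T
   with operations comp, meet : T -> T -> T and antidom : T -> T.
   comp f g = "apply f first, then g". *)

Section Defs.
Context {T : Type} (comp meet : T -> T -> T) (antidom : T -> T).

Definition le (a b : T) : Prop := meet a b = a.

Definition is_zero (a : T) : Prop := a = comp (antidom a) a.

Definition is_atom (a : T) : Prop :=
  ~ is_zero a /\ forall b, le b a -> is_zero b \/ b = a.

Definition atomic : Prop :=
  forall a, ~ is_zero a -> exists b, is_atom b /\ le b a.

Definition is_join (S : T -> Prop) (j : T) : Prop :=
  (forall s, S s -> le s j) /\
  (forall u, (forall s, S s -> le s u) -> le j u).

Definition comp_complete_left_distributive : Prop :=
  forall (a : T) (S : T -> Prop) (j : T), is_join S j ->
    is_join (fun t => exists s, S s /\ t = comp a s) (comp a j).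

Definition is_partial_function {U : Type} (R : U -> U -> Prop) : Prop :=
  forall x y z, R x y -> R x z -> y = z.

Definition is_representation {U : Type} (theta : T -> U -> U -> Prop) : Prop :=
  (forall a, is_partial_function (theta a)) /\
  (forall a b, (forall x y, theta a x y <-> theta b x y) -> a = b) /\
  (forall a b x z, theta (comp a b) x z <-> exists y, theta a x y /\ theta b y z) /\
  (forall a b x y, theta (meet a b) x y <-> theta a x y /\ theta b x y) /\
  (forall a x y, theta (antidom a) x y <-> x = y /\ ~ exists z, theta a x z).

Definition representable : Prop :=
  exists (U : Type) (theta : T -> U -> U -> Prop), is_representation theta.

Definition is_complete_representation {U : Type} (theta : T -> U -> U -> Prop)
  : Prop :=
  is_representation theta /\
  forall (S : T -> Prop) (j : T), is_join S j ->
    forall x y, theta j x y <-> exists s, S s /\ theta s x y.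

Definition completely_representable : Prop :=
  exists (U : Type) (theta : T -> U -> U -> Prop),
    is_complete_representation theta.

End Defs.

(* Necessity: a complete representation is in particular a representation,
   and composition distributes over joins because joins are unions.  For
   atomicity, if no atom lay below a nonzero a and (x, y) is in a, then a
   would be the join of the elements below a avoiding (x, y): in a
   representation a non-atom can always be split so as to avoid a given pair.
   Sufficiency: given a representation of an atomic algebra, keep only the
   points x at which every element defined at x has an atom below it that is
   still defined at x.  Atoms below a join lie below a member, so joins become
   unions on these points; complete left-distributivity makes the set of
   these points closed under the partial functions, and atomicity makes it
   large enough to still separate elements. *)

From Stdlib Require Import Classical ProofIrrelevance.

Section Representation.
Context {T : Type} (comp meet : T -> T -> T) (antidom : T -> T).
Context {U : Type} (theta : T -> U -> U -> Prop).
Hypothesis theta_rep : is_representation comp meet antidom theta.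

Local Notation "a ⊑ b" := (le meet a b) (at level 70).
Local Notation zero := (is_zero comp antidom).
Local Notation atom := (is_atom comp meet antidom).

(* a restricted to the complement of the domain of a /\ b, i.e. the pairs of a not in b *)
Definition diff (a b : T) : T := comp (antidom (meet a b)) a.

(* a restricted to the domain of c *)
Definition restrict (c a : T) : T := comp (antidom (antidom c)) a.

Lemma theta_functional a x y z : theta a x y -> theta a x z -> y = z.
Proof. apply theta_rep. Qed.

Lemma theta_inj a b : (forall x y, theta a x y <-> theta b x y) -> a = b.
Proof. apply theta_rep. Qed.

Lemma theta_comp a b x z : theta (comp a b) x z <-> exists y, theta a x y /\ theta b y z.
Proof. apply theta_rep. Qed.

Lemma theta_meet a b x y : theta (meet a b) x y <-> theta a x y /\ theta b x y.
Proof. apply theta_rep. Qed.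

Lemma theta_antidom a x y : theta (antidom a) x y <-> x = y /\ ~ exists z, theta a x z.
Proof. apply theta_rep. Qed.

Lemma theta_le a b : a ⊑ b <-> forall x y, theta a x y -> theta b x y.
Proof.
  split.
  - intros Hab x y Ha. unfold le in Hab. rewrite <- Hab, theta_meet in Ha. tauto.
  - intros Hab. apply theta_inj. intros x y. rewrite theta_meet. firstorder.
Qed.

Lemma le_trans a b c : a ⊑ b -> b ⊑ c -> a ⊑ c.
Proof. rewrite !theta_le. auto. Qed.

Lemma le_antisym a b : a ⊑ b -> b ⊑ a -> a = b.
Proof. rewrite !theta_le. intros. apply theta_inj. split; auto. Qed.

Lemma theta_zero a : zero a <-> forall x y, ~ theta a x y.
Proof.
  unfold is_zero. split.
  - intros -> x y. rewrite theta_comp. intros [w [Hw Ha]].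
    apply theta_antidom in Hw as [<- Hw]. eauto.
  - intros Ha. apply theta_inj. intros x y. rewrite theta_comp.
    split; [intros H; exfalso; eapply Ha; eauto|].
    intros [w [Hw Hwy]]. apply theta_antidom in Hw as [<- Hw]. exfalso; eauto.
Qed.

Lemma theta_nonzero a : ~ zero a -> exists x y, theta a x y.
Proof.
  intros Ha. apply NNPP. intros Hno. apply Ha, theta_zero. intros x y Hxy. eauto.
Qed.

Lemma theta_comp_antidom c a x y :
  theta (comp (antidom c) a) x y <-> (~ exists z, theta c x z) /\ theta a x y.
Proof.
  rewrite theta_comp. split.
  - intros [w [Hw Ha]]. apply theta_antidom in Hw as [<- Hw]. auto.
  - intros [Hc Ha]. exists x. rewrite theta_antidom. auto.
Qed.

Lemma theta_restrict c a x y :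
  theta (restrict c a) x y <-> (exists z, theta c x z) /\ theta a x y.
Proof.
  unfold restrict. rewrite theta_comp_antidom.
  assert (Hdom : (~ exists z, theta (antidom c) x z) <-> exists z, theta c x z).
  { split.
    - intros H. apply NNPP. intros Hc. apply H. exists x. apply theta_antidom. auto.
    - intros [z Hz] [w Hw]. apply theta_antidom in Hw as [_ Hw]. eauto. }
  rewrite Hdom. tauto.
Qed.

Lemma theta_diff a b x y : theta (diff a b) x y <-> theta a x y /\ ~ theta b x y.
Proof.
  unfold diff. rewrite theta_comp_antidom. split.
  - intros [Hab Ha]. split; [exact Ha|]. intros Hb. apply Hab. exists y.
    apply theta_meet. auto.
  - intros [Ha Hb]. split; [|exact Ha]. intros [z Hz].
    apply theta_meet in Hz as [Haz Hbz].
    rewrite (theta_functional a x z y Haz Ha) in Hbz. auto.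
Qed.

Lemma restrict_le c a : restrict c a ⊑ a.
Proof. apply theta_le. intros x y. rewrite theta_restrict. tauto. Qed.

Lemma diff_le a b : diff a b ⊑ a.
Proof. apply theta_le. intros x y. rewrite theta_diff. tauto. Qed.

Lemma zero_of_le_diff a b c : c ⊑ diff a b -> c ⊑ b -> zero c.
Proof.
  rewrite !theta_le, theta_zero. intros Hca Hcb x y Hc.
  destruct (proj1 (theta_diff a b x y) (Hca x y Hc)) as [_ Hb]. exact (Hb (Hcb x y Hc)).
Qed.

Lemma diff_nonzero a b : ~ a ⊑ b -> ~ zero (diff a b).
Proof.
  intros Hab Hz. apply Hab, theta_le. intros x y Ha. apply NNPP. intros Hb.
  apply (proj1 (theta_zero _) Hz x y), theta_diff. auto.
Qed.

Lemma le_eq_of_dom c d :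
  c ⊑ d -> (forall x y, theta d x y -> exists z, theta c x z) -> c = d.
Proof.
  intros Hcd Hdom. rewrite theta_le in Hcd. apply theta_inj. intros x y.
  split; [apply Hcd|]. intros Hd. destruct (Hdom x y Hd) as [z Hz].
  rewrite (theta_functional d x y z Hd (Hcd x z Hz)). exact Hz.
Qed.

Lemma atom_le_join S j g :
  is_join meet S j -> atom g -> g ⊑ j -> exists s, S s /\ g ⊑ s.
Proof.
  intros [Hub Hlub] [Hg Hmin] Hgj. apply NNPP. intros Hno.
  assert (Hdisj : forall s, S s -> zero (meet g s)).
  { intros s Hs. destruct (Hmin (meet g s)) as [Hz | Heq]; [|exact Hz|].
    - apply theta_le. intros x y. rewrite theta_meet. tauto.
    - exfalso. apply Hno. exists s. split; [exact Hs | exact Heq]. }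
  apply Hg, (zero_of_le_diff j g g); [|apply theta_le; auto].
  apply (le_trans g j); [exact Hgj|]. apply Hlub. intros s Hs.
  apply theta_le. intros x y Hsxy. apply theta_diff. split.
  - apply (proj1 (theta_le s j) (Hub s Hs)). exact Hsxy.
  - intros Hgxy. apply (proj1 (theta_zero _) (Hdisj s Hs) x y), theta_meet. auto.
Qed.

Lemma le_of_no_atom_le_diff a b :
  atomic comp meet antidom -> (forall g, atom g -> ~ g ⊑ diff a b) -> a ⊑ b.
Proof.
  intros Hat Hno. apply NNPP. intros Hab.
  destruct (Hat (diff a b) (diff_nonzero a b Hab)) as [g [Hg Hgd]].
  exact (Hno g Hg Hgd).
Qed.

Lemma join_atoms_le a :
  atomic comp meet antidom -> is_join meet (fun g => atom g /\ g ⊑ a) a.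
Proof.
  intros Hat. split; [intros g [_ Hga]; exact Hga|].
  intros u Hu. apply le_of_no_atom_le_diff; [exact Hat|]. intros g Hg Hgd.
  apply (proj1 Hg), (zero_of_le_diff a u g Hgd), Hu.
  split; [exact Hg | exact (le_trans g _ a Hgd (diff_le a u))].
Qed.

Lemma atom_restrict g a x y z :
  atom g -> theta g x y -> theta a x z -> atom (restrict g a).
Proof.
  intros [Hg Hmin] Hgxy Haxz. split.
  - rewrite theta_zero. intros Hz. apply (Hz x z), theta_restrict. eauto.
  - intros c Hc. destruct (classic (zero c)) as [Hcz | Hcz]; [left; exact Hcz | right].
    destruct (theta_nonzero c Hcz) as [p [q Hpq]].
    destruct (proj1 (theta_restrict g a p q) (proj1 (theta_le _ _) Hc p q Hpq)) as [[w Hw] _].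
    assert (Hgc : restrict c g = g).
    { destruct (Hmin (restrict c g) (restrict_le c g)) as [Hz | Heq]; [|exact Heq].
      exfalso. apply (proj1 (theta_zero _) Hz p w), theta_restrict. eauto. }
    apply le_eq_of_dom; [exact Hc|]. intros r t Hr.
    apply theta_restrict in Hr as [[v Hv] _].
    rewrite <- Hgc, theta_restrict in Hv. tauto.
Qed.

Lemma nonatom_split b x y :
  ~ zero b -> ~ atom b -> exists c, c ⊑ b /\ ~ zero c /\ ~ theta c x y.
Proof.
  intros Hb Hnat.
  assert (Hc : exists c, c ⊑ b /\ ~ zero c /\ c <> b).
  { apply NNPP. intros Hno. apply Hnat. split; [exact Hb|]. intros c Hcb.
    destruct (classic (zero c)) as [Hz | Hz]; [left; exact Hz | right].
    apply NNPP. intros Hne. apply Hno. eauto. }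
  destruct Hc as [c [Hcb [Hcz Hcne]]].
  destruct (classic (theta c x y)) as [Hcxy | Hcxy]; [|eauto].
  exists (comp (antidom c) b). repeat split.
  - apply theta_le. intros r t. rewrite theta_comp_antidom. tauto.
  - intros Hz. apply Hcne, le_eq_of_dom; [exact Hcb|]. intros r t Hbrt.
    apply NNPP. intros Hdom. apply (proj1 (theta_zero _) Hz r t), theta_comp_antidom. auto.
  - rewrite theta_comp_antidom. intros [Hdom _]. eauto.
Qed.

Lemma join_avoiding a x y :
  (forall g, atom g -> ~ g ⊑ a) ->
  is_join meet (fun c => c ⊑ a /\ ~ theta c x y) a.
Proof.
  intros Hno. split; [intros c [Hca _]; exact Hca|].
  intros u Hu. apply NNPP. intros Hau.
  destruct (nonatom_split (diff a u) x y) as [c [Hcd [Hcz Hcxy]]].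
  - exact (diff_nonzero a u Hau).
  - intros Hd. exact (Hno _ Hd (diff_le a u)).
  - apply Hcz, (zero_of_le_diff a u c Hcd), Hu.
    split; [exact (le_trans c _ a Hcd (diff_le a u)) | exact Hcxy].
Qed.

Section Complete.
Hypothesis theta_joins : forall S j, is_join meet S j ->
  forall x y, theta j x y <-> exists s, S s /\ theta s x y.

Lemma complete_atomic : atomic comp meet antidom.
Proof.
  intros a Ha. destruct (theta_nonzero a Ha) as [x [y Hxy]].
  apply NNPP. intros Hno.
  assert (Hno' : forall g, atom g -> ~ g ⊑ a) by eauto.
  apply (theta_joins _ a (join_avoiding a x y Hno')) in Hxy as [s [[_ Hs] Hsxy]].
  exact (Hs Hsxy).
Qed.

Lemma complete_comp_left_distributive : comp_complete_left_distributive comp meet.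
Proof.
  intros a S j Hj. split.
  - intros t [s [Hs ->]]. apply theta_le. intros x z. rewrite !theta_comp.
    intros [y [Ha Hs']]. exists y. split; [exact Ha|].
    exact (proj1 (theta_le s j) (proj1 Hj s Hs) y z Hs').
  - intros u Hu. apply theta_le. intros x z. rewrite theta_comp.
    intros [y [Ha Hj']]. apply (theta_joins S j Hj) in Hj' as [s [Hs Hsyz]].
    apply (proj1 (theta_le _ u) (Hu _ (ex_intro _ s (conj Hs eq_refl)))), theta_comp.
    eauto.
Qed.

End Complete.

Section Restriction.
Variable Q : U -> Prop.
Hypothesis Q_closed : forall a x y, Q x -> theta a x y -> Q y.
Hypothesis Q_separating :
  forall a b, (forall x y, Q x -> theta a x y -> theta b x y) -> a ⊑ b.

Definition restricted (a : T) (x y : {x | Q x}) : Prop :=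
  theta a (proj1_sig x) (proj1_sig y).

Lemma restricted_representation : is_representation comp meet antidom restricted.
Proof.
  unfold restricted.
  assert (Hsig : forall x y : {x | Q x}, proj1_sig x = proj1_sig y -> x = y).
  { intros x y. apply eq_sig_hprop. intros. apply proof_irrelevance. }
  assert (Hle : forall a b, (forall x y : {x | Q x},
      theta a (proj1_sig x) (proj1_sig y) -> theta b (proj1_sig x) (proj1_sig y)) -> a ⊑ b).
  { intros a b Hab. apply Q_separating. intros x y Hx Ha.
    exact (Hab (exist _ x Hx) (exist _ y (Q_closed a x y Hx Ha)) Ha). }
  split; [|split; [|split; [|split]]].
  - intros a x y z Hy Hz. apply Hsig. exact (theta_functional a _ _ _ Hy Hz).
  - intros a b Hab. apply le_antisym; apply Hle; firstorder.
  - intros a b x z. rewrite theta_comp. split.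
    + intros [y [Ha Hb]]. exists (exist _ y (Q_closed _ _ y (proj2_sig x) Ha)). auto.
    + intros [y [Ha Hb]]. eauto.
  - intros a b x y. apply theta_meet.
  - intros a x y. rewrite theta_antidom. split.
    + intros [Exy Hno]. split; [exact (Hsig x y Exy)|]. intros [z Hz]. eauto.
    + intros [<- Hno]. split; [reflexivity|]. intros [z Hz].
      apply Hno. exists (exist _ z (Q_closed _ _ z (proj2_sig x) Hz)). exact Hz.
Qed.

Lemma restricted_complete :
  (forall S j x y, is_join meet S j -> Q x -> theta j x y -> exists s, S s /\ theta s x y) ->
  is_complete_representation comp meet antidom restricted.
Proof.
  intros Hjoin. split; [exact restricted_representation|].
  intros S j Hj x y. unfold restricted. split.
  - intros Hxy. exact (Hjoin S j _ _ Hj (proj2_sig x) Hxy).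
  - intros [s [Hs Hsxy]]. exact (proj1 (theta_le s j) (proj1 Hj s Hs) _ _ Hsxy).
Qed.

End Restriction.

Definition atom_supported (x : U) : Prop :=
  forall a, (exists y, theta a x y) -> exists g, atom g /\ g ⊑ a /\ exists y, theta g x y.

Lemma atom_supported_of_atom g x y : atom g -> theta g x y -> atom_supported x.
Proof.
  intros Hg Hgxy a [z Hz]. exists (restrict g a).
  split; [exact (atom_restrict g a x y z Hg Hgxy Hz)|].
  split; [apply restrict_le|].
  exists z. apply theta_restrict. eauto.
Qed.

Lemma join_atom_supported S j x y :
  is_join meet S j -> atom_supported x -> theta j x y -> exists s, S s /\ theta s x y.
Proof.
  intros Hj Hx Hjxy. destruct (Hx j (ex_intro _ y Hjxy)) as [g [Hg [Hgj [z Hgxz]]]].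
  destruct (atom_le_join S j g Hj Hg Hgj) as [s [Hs Hgs]].
  exists s. split; [exact Hs|].
  rewrite (theta_functional j x y z Hjxy (proj1 (theta_le g j) Hgj x z Hgxz)).
  exact (proj1 (theta_le g s) Hgs x z Hgxz).
Qed.

Section Atomic.
Hypothesis theta_atomic : atomic comp meet antidom.
Hypothesis comp_cld : comp_complete_left_distributive comp meet.

(* An atom g below b ∘ a defined at x lies, by distributivity, below some b ∘ s
   with s an atom below a; the pair of g at x then passes through y and s. *)
Lemma atom_supported_step b x y : atom_supported x -> theta b x y -> atom_supported y.
Proof.
  intros Hx Hbxy a [w Haw].
  destruct (Hx (comp b a)) as [g [Hg [Hgba [v Hgxv]]]].
  { exists w. apply theta_comp. eauto. }
  pose proof (comp_cld b _ a (join_atoms_le a theta_atomic)) as Hj.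
  destruct (atom_le_join _ _ g Hj Hg Hgba) as [t [[s [[Hs Hsa] ->]] Hgbs]].
  exists s. split; [exact Hs|]. split; [exact Hsa|].
  apply (proj1 (theta_le g _) Hgbs), theta_comp in Hgxv as [y' [Hbxy' Hsy'v]].
  rewrite (theta_functional b x y' y Hbxy' Hbxy) in Hsy'v. eauto.
Qed.

Lemma le_of_atom_supported a b :
  (forall x y, atom_supported x -> theta a x y -> theta b x y) -> a ⊑ b.
Proof.
  intros Hab. apply le_of_no_atom_le_diff; [exact theta_atomic|]. intros g Hg Hgd.
  destruct (theta_nonzero g (proj1 Hg)) as [p [q Hpq]].
  destruct (proj1 (theta_diff a b p q) (proj1 (theta_le g _) Hgd p q Hpq)) as [Ha Hb].
  exact (Hb (Hab p q (atom_supported_of_atom g p q Hg Hpq) Ha)).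
Qed.

End Atomic.

End Representation.

Theorem mainTheorem16 (T : Type) (comp meet : T -> T -> T) (antidom : T -> T) :
  completely_representable comp meet antidom <->
  (representable comp meet antidom /\
   atomic comp meet antidom /\
   comp_complete_left_distributive comp meet).
Proof.
  split.
  - intros [U [theta [Hrep Hjoins]]]. split; [exists U, theta; exact Hrep|]. split.
    + exact (complete_atomic comp meet antidom theta Hrep Hjoins).
    + exact (complete_comp_left_distributive comp meet antidom theta Hrep Hjoins).
  - intros [[U [theta Hrep]] [Hat Hcld]].
    exists {x | atom_supported comp meet antidom theta x}.
    eexists. apply restricted_complete.
    + exact Hrep.
    + exact (atom_supported_step comp meet antidom theta Hrep Hat Hcld).
    + exact (le_of_atom_supported comp meet antidom theta Hrep Hat).
    + exact (join_atom_supported comp meet antidom theta Hrep).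
Qed.
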